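(* Let $H$ be a graph and $n$ a positive integer. Then $\mathrm{IR}(H, K_{1,n}) \leq |E(H)|(n-1) + |V(H)|$. Moreover, if $s$ is a positive integer and $H'$ is the blow-up of $H$ with $s$ vertices in each part, then $\mathrm{IR}(H', K_{1,n}) \leq s\big(|E(H)|(n-1)+|V(H)|\big)$.
   Context: All graphs are finite and simple. $K_{1,n}$ denotes the star with $n$ edges. The blow-up of $H$ with $s$ vertices in each part is the graph obtained by replacing each vertex $v$ of $H$ by an independent set $V_v$ of $s$ vertices (the sets pairwise disjoint) and joining $u'\in V_u$ to $v'\in V_v$ if and only if $uv\in E(H)$. For graphs $F$, $H$, $G$, write $F \overset{\text{ind}}{\longrightarrow} (H,G)$ if for every coloring of the edges of $F$ with red and blue there is either a red induced copy of $H$ (a vertex set $S\subseteq V(F)$ with $F[S]\cong H$ and all edges of $F[S]$ red) or a blue induced copy of $G$ (defined analogously with blue). The induced Ramsey number $\mathrm{IR}(H,G)$ is the smallest number of vertices of a graph $F$ with $F \overset{\text{ind}}{\longrightarrow} (H,G)$. *)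

From mathcomp Require Import all_boot.
Set Implicit Arguments. Unset Strict Implicit. Unset Printing Implicit Defensive.

Record sgraph := SGraph {
  vert :> finType;
  adj : rel vert;
  adj_sym : symmetric adj;
  adj_irr : irreflexive adj }.

Definition edges (G : sgraph) : {set {set G}} :=
  [set e : {set G} | [exists u : G, exists v : G, adj u v && (e == [set u; v])]].

(* Star K_{1,n}: center None, leaves Some i. *)
Definition star_adj (n : nat) : rel (option 'I_n) :=
  fun x y => match x, y with
             | None, Some _ | Some _, None => true
             | _, _ => false end.
Lemma star_sym n : symmetric (@star_adj n). Proof. by case=> [?|] [?|]. Qed.
Lemma star_irr n : irreflexive (@star_adj n). Proof. by case. Qed.
Definition star (n : nat) : sgraph := SGraph (@star_sym n) (@star_irr n).

Definition blowup_adj (H : sgraph) (s : nat) : rel (H * 'I_s)%type :=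
  fun x y => adj x.1 y.1.
Lemma blowup_sym H s : symmetric (@blowup_adj H s).
Proof. by move=> x y; rewrite /blowup_adj adj_sym. Qed.
Lemma blowup_irr H s : irreflexive (@blowup_adj H s).
Proof. by move=> x; rewrite /blowup_adj adj_irr. Qed.
Definition blowup (H : sgraph) (s : nat) : sgraph :=
  SGraph (@blowup_sym H s) (@blowup_irr H s).

Definition mono_induced_copy (F H : sgraph) (c : rel F) (b : bool) : Prop :=
  exists f : H -> F, injective f /\
    (forall u v : H, adj (f u) (f v) = adj u v) /\
    (forall u v : H, adj u v -> c (f u) (f v) = b).

(* F ->ind (H, G): every red/blue colouring of E(F) (a symmetric c : rel F,
   true = red, false = blue; values on non-edges irrelevant) has a red induced
   H or a blue induced G. *)
Definition ind_arrows (F H G : sgraph) : Prop :=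
  forall c : rel F, symmetric c ->
    mono_induced_copy H c true \/ mono_induced_copy G c false.

Definition IR_le (H G : sgraph) (N : nat) : Prop :=
  exists F : sgraph, #|F| <= N /\ ind_arrows F H G.

From mathcomp Require Import all_boot zify.
From Stdlib Require Import Classical.
Set Implicit Arguments. Unset Strict Implicit. Unset Printing Implicit Defensive.

(* Let F be the blow-up of H in which vertex v is replaced by
   s (d(v) (n - 1) + 1) independent vertices, where d(v) counts the neighbours
   of v that come earlier in a fixed ordering of V(H); as the d(v) sum to
   |E(H)|, F is small enough.  In a colouring of F without blue induced
   K_{1,n}, no vertex has n blue neighbours inside one part, since a part is
   independent.  Going through V(H) in order, pick s vertices in each part:
   the s d(v) vertices already picked in earlier neighbouring parts have at
   most s d(v) (n - 1) blue neighbours in the part of v, so s vertices of that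
   part are joined in red to all of them.  The picked vertices induce a red
   blow-up of H, and s = 1 yields a red induced H. *)

Lemma leq_card_bigcup (I T : finType) (P : pred I) (F : I -> {set T}) :
  #|\bigcup_(i | P i) F i| <= \sum_(i | P i) #|F i|.
Proof.
elim/big_rec2: _ => [|i n U _ le]; first by rewrite cards0.
by rewrite (leq_trans (leq_card_setU (F i) U).1) ?leq_add2l.
Qed.

Lemma exists_subset_of_card (T : finType) (A : {set T}) k :
  k <= #|A| -> exists2 B : {set T}, B \subset A & #|B| = k.
Proof.
move=> le_kA; exists [set x in take k (enum A)].
  by apply/subsetP => x; rewrite inE => /mem_take; rewrite mem_enum.
rewrite cardsE (card_uniqP _) ?take_uniq ?enum_uniq // size_take -cardE.
by case: ltngtP le_kA.
Qed.

Definition back_deg (H : sgraph) (v : H) : nat :=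
  #|[set u | adj u v & enum_rank u < enum_rank v]|.

Lemma sum_back_deg (H : sgraph) : \sum_(v : H) back_deg v <= #|edges H|.
Proof.
pose A := [set p : H * H | adj p.2 p.1 & enum_rank p.2 < enum_rank p.1].
have -> : \sum_(v : H) back_deg v = #|A|.
  rewrite /back_deg; under eq_bigr do rewrite -sum1dep_card.
  by rewrite pair_big_dep sum1dep_card.
have inj_A : {in A &, injective (fun p : H * H => [set p.1; p.2])}.
  move=> [v u] [v' u']; rewrite !inE /= => /andP[_ lt_uv] /andP[_ lt_uv'] e.
  have := set22 v u; have := set21 v u; rewrite e => /set2P[] ev /set2P[] eu;
    subst; try done; move: lt_uv lt_uv'; lia.
rewrite -(card_in_imset inj_A); apply/subset_leq_card/subsetP => _ /imsetP[[v u] + ->].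
rewrite !inE => /andP[uv _].
by apply/existsP; exists u; apply/existsP; exists v; rewrite uv setUC eqxx.
Qed.

Section WeightedBlowup.
Variables (H : sgraph) (w : H -> nat).

Definition wblowup_adj : rel {v : H & 'I_(w v)} := fun x y => adj (tag x) (tag y).
Lemma wblowup_sym : symmetric wblowup_adj.
Proof. by move=> x y; rewrite /wblowup_adj adj_sym. Qed.
Lemma wblowup_irr : irreflexive wblowup_adj.
Proof. by move=> x; rewrite /wblowup_adj adj_irr. Qed.
Definition weighted_blowup : sgraph := SGraph wblowup_sym wblowup_irr.

Lemma card_weighted_blowup : #|weighted_blowup| = \sum_(v : H) w v.
Proof.
by rewrite card_tagged sumnE big_map -big_enum; apply: eq_bigr => v _; rewrite card_ord.
Qed.

Lemma card_weighted_blowup_fibre (v : H) :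
  #|[set x : weighted_blowup | tag x == v]| = w v.
Proof.
have -> : [set x : weighted_blowup | tag x == v] =
          Tagged (fun u => 'I_(w u)) @: [set: 'I_(w v)].
  apply/setP => -[u i]; rewrite !inE; apply/eqP/imsetP => [<-|[j _ ->]] //.
  by exists i.
by rewrite card_imset ?cardsT ?card_ord // => i j /eqP; rewrite eq_Tagged => /eqP.
Qed.

End WeightedBlowup.

Lemma star_copy (F : sgraph) (c : rel F) (n : nat) (x : F) (L : {set F}) :
  symmetric c -> n <= #|L| ->
  {in L, forall y, adj x y && ~~ c x y} -> {in L &, forall y z, ~~ adj y z} ->
  mono_induced_copy (star n) c false.
Proof.
move=> c_sym le_nL blue_xL indep_L.
pose leaf (i : 'I_n) : F := enum_val (widen_ord le_nL i).
have leafL i : leaf i \in L := enum_valP _.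
have x_leaf i : adj x (leaf i) && ~~ c x (leaf i) := blue_xL _ (leafL i).
pose f (o : star n) : F := if o is Some i then leaf i else x.
exists f; split; [|split].
- have x_neq_leaf i : x != leaf i.
    by apply: contraTneq (x_leaf i) => <-; rewrite adj_irr.
  move=> [i|] [j|] //= e; last 2 first.
  + by move/eqP: (x_neq_leaf i); rewrite e.
  + by move/eqP: (x_neq_leaf j); rewrite e.
  by move: e => /enum_val_inj/(congr1 val) /= /ord_inj ->.
- move=> [i|] [j|] /=; rewrite ?adj_irr //.
  + exact/negbTE/indep_L.
  + by rewrite adj_sym; case/andP: (x_leaf i).
  + by case/andP: (x_leaf j).
- move=> [i|] [j|] //= _; last by case/andP: (x_leaf j) => _ /negbTE.
  by rewrite c_sym; case/andP: (x_leaf i) => _ /negbTE.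
Qed.

Definition red_on (F : sgraph) (c : rel F) (S : {set F}) : Prop :=
  {in S &, forall x y, adj x y -> c x y}.

Section ColouredBlowup.
Variables (H F : sgraph) (p : F -> H).
Hypothesis adj_p : forall x y : F, adj x y = adj (p x) (p y).
Variables (c : rel F) (s n : nat).
Hypothesis c_sym : symmetric c.

Local Notation fibre v := [set x | p x == v].

Lemma blowup_copy_of_fibres (S : {set F}) :
  (forall v, #|S :&: fibre v| = s) -> red_on c S ->
  mono_induced_copy (blowup H s) c true.
Proof.
move=> card_S red_S.
pose f (x : blowup H s) : F := enum_val (cast_ord (esym (card_S x.1)) x.2).
have f_fibre x : f x \in S :&: fibre x.1 := enum_valP _.
have S_f x : f x \in S by case/setIP: (f_fibre x).
have p_f x : p (f x) = x.1 by case/setIP: (f_fibre x) => _; rewrite inE => /eqP.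
exists f; split; [|split].
- move=> [u i] [v j] e.
  have e_uv : u = v by move: (p_f (u, i)) (p_f (v, j)); rewrite e /= => -> ->.
  by subst v; move: e => /enum_val_inj/cast_ord_inj /= ->.
- by move=> x y; rewrite adj_p !p_f.
- by move=> x y xy; apply: red_S; rewrite ?S_f ?adj_p ?p_f.
Qed.

Hypothesis no_blue_star : ~ mono_induced_copy (star n) c false.

Lemma few_blue_in_fibre (y : F) (v : H) :
  adj (p y) v -> #|[set x in fibre v | ~~ c y x]| <= n - 1.
Proof.
move=> yv; rewrite leqNgt; apply/negP => many_blue; apply: no_blue_star.
apply: (star_copy (x := y) (L := [set x in fibre v | ~~ c y x]) c_sym).
- by move: many_blue; lia.
- by move=> x; rewrite !inE => /andP[/eqP px ->]; rewrite adj_p px yv.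
- move=> x z; rewrite !inE adj_p => /andP[/eqP -> _] /andP[/eqP -> _].
  by rewrite adj_irr.
Qed.

Lemma red_fibre_extension (S : {set F}) (v : H) :
  red_on c S -> s + #|[set y in S | adj (p y) v]| * (n - 1) <= #|fibre v| ->
  exists2 T : {set F}, T \subset fibre v & #|T| = s /\ red_on c (S :|: T).
Proof.
move=> red_S large.
pose N := [set y in S | adj (p y) v].
pose Bad := \bigcup_(y in N) [set x in fibre v | ~~ c y x].
have card_Bad : #|Bad| <= #|N| * (n - 1).
  rewrite (leq_trans (leq_card_bigcup _ _)) // -sum_nat_const leq_sum // => y.
  by rewrite inE => /andP[_]; exact: few_blue_in_fibre.
have : s <= #|fibre v :\: Bad|.
  rewrite cardsD; have := subset_leq_card (subsetIr (fibre v) Bad).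
  by move: card_Bad large; rewrite -/N; lia.
case/exists_subset_of_card => T sub_T card_T.
have T_fibre := subset_trans sub_T (subsetDl _ _).
exists T => //; split => //.
have red_ST x y : x \in S -> y \in T -> adj x y -> c x y.
  move=> xS yT xy; have /setDP[y_v y_good] := subsetP sub_T y yT.
  move: y_v; rewrite inE => /eqP p_y.
  apply: contraNT y_good => not_c; apply/bigcupP; exists x.
  - by rewrite inE xS -p_y -adj_p.
  - by rewrite !inE p_y eqxx not_c.
move=> x y; rewrite !inE => /orP[xS|xT] /orP[yS|yT] xy.
- exact: red_S.
- exact: red_ST.
- by rewrite c_sym; apply: red_ST; rewrite // adj_sym.
- move: xy; rewrite adj_p.
  have := subsetP T_fibre x xT; have := subsetP T_fibre y yT.
  by rewrite !inE => /eqP -> /eqP ->; rewrite adj_irr.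
Qed.

Hypothesis fibre_large :
  forall v, s + s * back_deg v * (n - 1) <= #|fibre v|.

Lemma red_fibres_of_prefix k : k <= #|H| ->
  exists S : {set F}, [/\ {in S, forall x, enum_rank (p x) < k},
    forall v, enum_rank v < k -> #|S :&: fibre v| = s & red_on c S].
Proof.
elim: k => [_|k IH lt_kH]; first by exists set0; split=> // [x|v x]; rewrite inE.
have [S [S_lt S_card red_S]] := IH (ltnW lt_kH).
pose v := enum_val (Ordinal lt_kH).
have rank_v : enum_rank v = k :> nat by rewrite enum_valK.
have S_v : S :&: fibre v = set0.
  apply/setP => x; rewrite !inE; apply/andP => -[/S_lt]; rewrite -rank_v.
  by move=> + /eqP px; rewrite px ltnn.
have card_N : #|[set y in S | adj (p y) v]| <= s * back_deg v.
  pose B := [set u | adj u v & enum_rank u < enum_rank v].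
  apply: (@leq_trans #|\bigcup_(u in B) (S :&: fibre u)|).
    apply/subset_leq_card/subsetP => y; rewrite inE => /andP[yS yv].
    apply/bigcupP; exists (p y); first by rewrite inE yv rank_v S_lt.
    by rewrite !inE yS eqxx.
  rewrite (leq_trans (leq_card_bigcup _ _)) // mulnC -sum_nat_const.
  by apply/eq_leq/eq_bigr => u; rewrite inE rank_v => /andP[_ /S_card].
have [|T T_fibre [card_T red_ST]] := red_fibre_extension red_S (v := v).
  by apply: leq_trans (fibre_large v); rewrite leq_add2l leq_mul2r card_N orbT.
exists (S :|: T); split=> // [x|u].
  rewrite inE => /orP[/S_lt|/(subsetP T_fibre)]; first exact: ltnW.
  by rewrite inE => /eqP ->; rewrite rank_v.
rewrite ltnS leq_eqVlt setIUl => /orP[/eqP rank_u|lt_uk].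
  have -> : u = v by apply/enum_rank_inj/val_inj; rewrite /= rank_u rank_v.
  by rewrite S_v set0U (setIidPl T_fibre).
suff -> : T :&: fibre u = set0 by rewrite setU0 S_card.
apply/setP => x; rewrite !inE; apply/andP => -[/(subsetP T_fibre)].
by rewrite inE => /eqP -> /eqP v_u; move: lt_uk; rewrite -v_u rank_v ltnn.
Qed.

Lemma red_blowup_copy : mono_induced_copy (blowup H s) c true.
Proof.
have [S [_ S_card red_S]] := red_fibres_of_prefix (leqnn #|H|).
exact: blowup_copy_of_fibres (fun v => S_card v (ltn_ord _)) red_S.
Qed.

End ColouredBlowup.

Lemma IR_le_blowup_star (H : sgraph) (s n : nat) :
  IR_le (blowup H s) (star n) (s * (#|edges H| * (n - 1) + #|H|)).
Proof.
pose w (v : H) := s * (back_deg v * (n - 1) + 1).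
exists (weighted_blowup w); split.
  rewrite card_weighted_blowup -big_distrr big_split /= sum1_card -big_distrl /=.
  by rewrite leq_mul2l leq_add2r leq_mul2r sum_back_deg !orbT.
move=> c c_sym.
case: (classic (mono_induced_copy (star n) c false)) => [blue_star|no_blue_star].
  by right.
left; apply: (@red_blowup_copy H (weighted_blowup w) (@tag H _) (fun _ _ => erefl)
                               c s n c_sym no_blue_star) => v.
by rewrite card_weighted_blowup_fibre /w; lia.
Qed.

Lemma IR_le_of_blowup (H G : sgraph) (s N : nat) :
  0 < s -> IR_le (blowup H s) G N -> IR_le H G N.
Proof.
move=> s_gt0 [F [card_F arrows_F]]; exists F; split=> // c c_sym.
case: (arrows_F c c_sym) => [[f [f_inj [f_adj f_red]]]|]; last by right.
left; exists (fun v => f (v, Ordinal s_gt0)); split; [|split].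
- by move=> u v /f_inj [].
- by move=> u v; rewrite f_adj.
- by move=> u v uv; rewrite f_red.
Qed.

Theorem lemma2 (H : sgraph) (n : nat) :
  0 < n ->
  IR_le H (star n) (#|edges H| * (n - 1) + #|H|) /\
  (forall s : nat, 0 < s ->
     IR_le (blowup H s) (star n) (s * (#|edges H| * (n - 1) + #|H|))).
Proof.
move=> _; split=> [|s _]; last exact: IR_le_blowup_star.
by have := IR_le_blowup_star H 1 n; rewrite mul1n; apply: IR_le_of_blowup.
Qed.
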